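(* For integers $0\le m<n$, the probability that the boundary Markov chain started at $M_0=n$ ever hits $m$ is \[ 1-\frac{(n)_{m+1}}{(n+1/2)_{m+1}} . \] In particular the probability of ever hitting $0$ from $n$ is $\frac{1}{2n+1}$, so the chain is transient.
   Context: The boundary Markov chain is the Markov chain $(M_n)_{n\ge0}$ on $\{0,1,2,\dots\}$ with $M_{n+1}=M_n+X_n$. Given $M_n=m$, its step $X_n$ has the law \[ \mathbb P(X_n=1\mid M_n=m)=\frac{2m+3}{3m+3}. \] For $1\le k\le m$, \[ \mathbb P(X_n=-k\mid M_n=m)=\frac{2(2k-2)!}{(k-1)!(k+1)!}\cdot\frac{m!^2(2m-2k+1)!}{(m-k)!^2(2m+1)!}. \] The descending factorial is $(x)_k=x(x-1)\cdots(x-k+1)=\Gamma(x+1)/\Gamma(x-k+1)$. *)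

From HB Require Import structures.
From mathcomp Require Import all_boot all_order all_algebra.
From mathcomp Require Import all_classical all_reals all_analysis.
Set Implicit Arguments. Unset Strict Implicit. Unset Printing Implicit Defensive.
Import Order.TTheory GRing.Theory Num.Theory.
Local Open Scope ring_scope.

Section BoundaryChain.
Variable R : realType.

Definition falling (x : R) (k : nat) : R := \prod_(i < k) (x - i%:R).

Definition p_up (m : nat) : R := (2 * m + 3)%N%:R / (3 * m + 3)%N%:R.

(* P(X = -k | M = m), for 1 <= k <= m. *)
Definition p_down (m k : nat) : R :=
  (2 * (2 * k - 2)`!)%N%:R / ((k - 1)`! * (k + 1)`!)%N%:R
  * ((m`! ^ 2 * (2 * m - 2 * k + 1)`!)%N%:R
     / (((m - k)`! ^ 2) * (2 * m + 1)`!)%N%:R).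

(* hit_within m k x = P_x(the chain hits m within k steps),
   i.e. P(exists j <= k, M_j = m | M_0 = x), computed by first-step analysis:
   from x the chain moves to x+1 or to x-j for 1 <= j <= x. *)
Fixpoint hit_within (m k x : nat) {struct k} : R :=
  if x == m then 1 else
  match k with
  | 0 => 0
  | k'.+1 => p_up x * hit_within m k' x.+1
             + \sum_(1 <= j < x.+1) p_down x j * hit_within m k' (x - j)
  end.

(* return_within k x = P_x(the chain returns to x at some time in 1..k+1). *)
Definition return_within (k x : nat) : R :=
  p_up x * hit_within x k x.+1
  + \sum_(1 <= j < x.+1) p_down x j * hit_within x k (x - j).

End BoundaryChain.

From HB Require Import structures.
From mathcomp Require Import all_boot all_order all_algebra.
From mathcomp Require Import all_classical all_reals all_analysis.
From mathcomp Require Import ring lra zify.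
Set Implicit Arguments.
Unset Strict Implicit.
Unset Printing Implicit Defensive.
Import Order.TTheory GRing.Theory Num.Theory.
Import numFieldNormedType.Exports.
Local Open Scope classical_set_scope.
Local Open Scope ring_scope.

(* The function phi n = (n)_(m+1) / (n + 1/2)_(m+1) vanishes on [0, m],
   increases to 1 and is harmonic for the chain off m: for x, y > m one has
   p(x, y) phi y = phi x p(x - m - 1, y - m - 1), i.e. the h-transform of the
   chain by phi is the chain shifted by m + 1, whose kernel is stochastic.
   Hence 1 - phi dominates the probabilities of hitting m within k steps, while
   phi L - phi - P(hit m) is dominated by the probability of staying in
   [0, L) \ {m}, which decays geometrically because the chain steps up with
   probability at least 2/3.  Letting k and then L go to infinity,
   P_n(hit m) = 1 - phi n. *)

Section SkipFreeChain.
Variable R : realType.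
Variables (pu : nat -> R) (pd : nat -> nat -> R).

Definition step (f : nat -> R) (x : nat) : R :=
  pu x * f x.+1 + \sum_(1 <= j < x.+1) pd x j * f (x - j)%N.

Fixpoint hit (m k x : nat) : R :=
  if x == m then 1 else if k is k'.+1 then step (hit m k') x else 0.

Fixpoint stay (A : pred nat) (k x : nat) : R :=
  if x \in A then (if k is k'.+1 then step (stay A k') x else 1) else 0.

Variable q : R.
Hypothesis q_gt0 : 0 < q.
Hypothesis pu_ge : forall x, q <= pu x.
Hypothesis pd_ge0 : forall x j, 0 <= pd x j.
Hypothesis pu_add_sum_pd : forall x, pu x + \sum_(1 <= j < x.+1) pd x j = 1.

Lemma pu_ge0 x : 0 <= pu x.
Proof. exact: le_trans (ltW q_gt0) (pu_ge x). Qed.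

Lemma q_le1 : q <= 1.
Proof.
apply: le_trans (pu_ge 0) _; rewrite -(pu_add_sum_pd 0) lerDl.
by apply: sumr_ge0 => j _.
Qed.

Lemma ler_step f g x : (forall y, f y <= g y) -> step f x <= step g x.
Proof.
move=> fg; rewrite lerD ?ler_wpM2l ?pu_ge0 //.
by apply: ler_sum => j _; rewrite ler_wpM2l.
Qed.

Lemma stepB f g x : step (fun y => f y - g y) x = step f x - step g x.
Proof.
rewrite /step (eq_bigr (fun j => pd x j * f (x - j)%N - pd x j * g (x - j)%N)).
  by rewrite sumrB; ring.
by move=> j _; rewrite mulrBr.
Qed.

Lemma step_cst c x : step (fun=> c) x = c.
Proof. by rewrite /step -big_distrl -mulrDl pu_add_sum_pd mul1r. Qed.

Lemma step_le_cst f c x : (forall y, f y <= c) -> step f x <= c.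
Proof. by move=> fc; rewrite -(step_cst c x); apply: ler_step. Qed.

Lemma step_ge_cst f c x : (forall y, c <= f y) -> c <= step f x.
Proof. by move=> cf; rewrite -(step_cst c x); apply: ler_step. Qed.

Lemma hit_self m k : hit m k m = 1.
Proof. by case: k => /=; rewrite eqxx. Qed.

Lemma hit_ge0 m k x : 0 <= hit m k x.
Proof.
elim: k x => [|k IH] x /=; case: eqP => // _; exact: step_ge_cst.
Qed.

Lemma stay_ge0 A k x : 0 <= stay A k x.
Proof. elim: k x => [|k IH] x /=; case: ifP => // _; exact: step_ge_cst. Qed.

Lemma stay_le1 A k x : stay A k x <= 1.
Proof. elim: k x => [|k IH] x /=; case: ifP => // _; exact: step_le_cst. Qed.

Lemma stay_out A k x : x \notin A -> stay A k x = 0.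
Proof. by case: k => [|k] /= /negbTE ->. Qed.

Lemma stay_succ_le A k x : stay A k.+1 x <= stay A k x.
Proof.
elim: k x => [|k IH] x /=; case: ifP => // _; last exact: ler_step.
by apply: step_le_cst => y; case: ifP.
Qed.

Lemma stay_le_mono A k k' x : (k <= k')%N -> stay A k' x <= stay A k x.
Proof.
move/subnK <-; elim: (k' - k)%N x => [|d IH] x //.
exact: le_trans (stay_succ_le A _ x) (IH x).
Qed.

Section Decay.
Variables (A : pred nat) (L : nat).
Hypothesis A_lt : forall x, x \in A -> (x < L)%N.

(* from y < L the chain climbs out of [0, L) with probability at least q ^+ (L - y) *)
Lemma stay_decay k B : (forall y, stay A k y <= B) ->
  forall d y, (L <= y + d)%N -> stay A (d + k) y <= B * (1 - q ^+ (L - y)).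
Proof.
move=> leB; have B0 : 0 <= B := le_trans (stay_ge0 A k 0) (leB 0).
have qn_le1 n : q ^+ n <= 1 by apply: exprn_ile1; [exact: ltW | exact: q_le1].
elim=> [|d IH] y Ly.
  rewrite add0n stay_out; last by apply/negP => /A_lt; lia.
  by rewrite (_ : L - y = 0)%N ?expr0 ?subrr ?mulr0 //; lia.
rewrite addSn /=; case: ifP => [/A_lt yL|_]; last first.
  by rewrite mulr_ge0 // subr_ge0.
have up : pu y * stay A (d + k) y.+1 <= pu y * (B * (1 - q ^+ (L - y.+1))).
  by rewrite ler_wpM2l ?pu_ge0 // IH //; lia.
have down : \sum_(1 <= j < y.+1) pd y j * stay A (d + k) (y - j)%N <= (1 - pu y) * B.
  rewrite -(pu_add_sum_pd y) addrC addKr big_distrl /=.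
  apply: ler_sum => j _; rewrite ler_wpM2l //.
  exact: le_trans (stay_le_mono _ _ (leq_addl d k)) (leB _).
rewrite (_ : L - y = (L - y.+1).+1)%N ?exprS; last by lia.
have := pu_ge y; have := exprn_ge0 (L - y.+1) (ltW q_gt0).
move: up down; rewrite /step; set Q := q ^+ _ => up down Q0 qpu.
have BQ := mulr_ge0 B0 Q0; nra.
Qed.

Lemma stay_geometric t y : stay A (t * L) y <= (1 - q ^+ L) ^+ t.
Proof.
have r0 : 0 <= 1 - q ^+ L by rewrite subr_ge0 exprn_ile1 ?q_le1 ?ltW.
elim: t y => [|t IH] y; first by rewrite mul0n expr0 stay_le1.
rewrite mulSn exprSr.
apply: le_trans (stay_decay IH (leq_addl y L)) _.
rewrite ler_wpM2l ?exprn_ge0 // lerD2l lerN2.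
by apply: ler_wiXn2l; [exact: ltW | exact: q_le1 | lia].
Qed.

Lemma stay_cvg0 y : stay A k y @[k --> \oo] --> 0.
Proof.
have r0 : 0 <= 1 - q ^+ L by rewrite subr_ge0 exprn_ile1 ?q_le1 ?ltW.
have r1 : `|1 - q ^+ L| < 1.
  by have := exprn_gt0 L q_gt0; rewrite ger0_norm //; lra.
apply/cvgrPdist_le => e e0.
have /cvgrPdist_le /(_ e e0) [t _ rt] := cvg_expr r1.
exists (t * L)%N => // k /= tLk.
rewrite sub0r normrN ger0_norm ?stay_ge0 //.
apply: le_trans (stay_le_mono _ _ tLk) (le_trans (stay_geometric t y) _).
by have := rt t (leqnn t); rewrite /= sub0r normrN ger0_norm ?exprn_ge0.
Qed.

End Decay.

Section Potential.
Variables (m : nat) (phi : nat -> R).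
Hypothesis phi_ge0 : forall x, 0 <= phi x.
Hypothesis phi_nondecreasing : nondecreasing_seq phi.
Hypothesis phi_cvg1 : phi @ \oo --> (1 : R).
Hypothesis phi_m : phi m = 0.
Hypothesis step_phi : forall x, x != m -> step phi x = phi x.

Lemma phi_le1 x : phi x <= 1.
Proof.
by rewrite -(cvg_lim _ phi_cvg1) //; apply: nondecreasing_cvgn_le => //; apply/cvg_ex; exists 1.
Qed.

Lemma step_compl_phi x : x != m -> step (fun y => 1 - phi y) x = 1 - phi x.
Proof. by move=> xm; rewrite stepB step_cst step_phi. Qed.

Lemma hit_le_compl_phi k x : hit m k x <= 1 - phi x.
Proof.
elim: k x => [|k IH] x /=; case: eqP => [->|/eqP xm]; rewrite ?phi_m ?subr0 //.
- by rewrite subr_ge0 phi_le1.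
- by rewrite -step_compl_phi //; apply: ler_step.
Qed.

(* phi L - phi - hit m k is subharmonic on [0, L) \ {m} and nonpositive off it *)
Lemma phi_sub_hit_le_stay L k x :
  phi L - phi x - hit m k x <= stay [pred y | (y < L)%N && (y != m)] k x.
Proof.
elim: k x => [|k IH] x; have [->|xm] := eqVneq x m; try
  (by rewrite phi_m hit_self stay_out ?inE ?eqxx ?andbF //; have := phi_le1 L; lra).
all: rewrite /= (negbTE xm) inE xm andbT; case: ltnP => xL.
- by have := phi_le1 L; have := phi_ge0 x; lra.
- by have := phi_nondecreasing xL; lra.
- by rewrite -(step_phi xm) -[phi L](step_cst _ x) -!stepB; apply: ler_step.
- by have := phi_nondecreasing xL; have := step_ge_cst x (hit_ge0 m k); lra.
Qed.

Theorem hit_cvg x : hit m k x @[k --> \oo] --> 1 - phi x.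
Proof.
apply/cvgrPdist_le => e e0; have e20 : 0 < e / 2 by lra.
have /cvgrPdist_le /(_ _ e20) [L _ phiL] := phi_cvg1.
have {phiL} := phiL L (leqnn L); rewrite /= ger0_norm ?subr_ge0 ?phi_le1 // => phiL.
set A := [pred y | (y < L)%N && (y != m)].
have A_lt y : y \in A -> (y < L)%N by case/andP.
have /cvgrPdist_le /(_ _ e20) := stay_cvg0 A_lt x; apply: filterS => k.
rewrite sub0r normrN ger0_norm ?stay_ge0 // => stay_e.
have := phi_sub_hit_le_stay L k x; have := hit_le_compl_phi k x.
by move=> ? ?; rewrite ger0_norm; lra.
Qed.

End Potential.
End SkipFreeChain.

Ltac nonzero := repeat (apply/andP; split); try done; apply: lt0r_neq0; lra.

Section BoundaryChain.
Variable R : realType.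

Lemma natr_fact_neq0 n : n`!%:R != 0 :> R.
Proof. by rewrite pnatr_eq0 -lt0n fact_gt0. Qed.

Lemma p_down1 y : p_down R y.+1 1 = y.+1%:R / (2 * (2 * y + 3))%N%:R.
Proof.
rewrite /p_down (_ : 2 * y.+1 - 2 * 1 + 1 = (2 * y).+1)%N; last by lia.
rewrite (_ : 2 * y.+1 + 1 = (2 * y).+3)%N; last by lia.
rewrite (_ : (2 * (2 * 1 - 2)`!)%N = 2)%N // (_ : ((1 - 1)`! * (1 + 1)`!)%N = 2)%N //.
rewrite subn1 (factS y) (factS (2 * y).+2) (factS (2 * y).+1).
move: (natr_fact_neq0 y) (natr_fact_neq0 (2 * y).+1) (ler0n R y).
move: y`! (2 * y).+1`! => a b a0 b0 y0.
by rewrite !(natrD, natrM) -!natr1; field; nonzero.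
Qed.

Lemma p_downS k d : p_down R (k.+2 + d) k.+2
  = p_down R (k.+2 + d) k.+1 * ((2 * k + 1)%N%:R * d.+1%:R) / (k.+3%:R * (2 * d + 3)%N%:R).
Proof.
rewrite /p_down addKn (_ : k.+2 + d - k.+1 = d.+1)%N; last by lia.
rewrite (_ : 2 * k.+2 - 2 = (2 * k).+2)%N; last by lia.
rewrite (_ : 2 * k.+1 - 2 = 2 * k)%N; last by lia.
rewrite (_ : 2 * (k.+2 + d) - 2 * k.+2 + 1 = (2 * d).+1)%N; last by lia.
rewrite (_ : 2 * (k.+2 + d) - 2 * k.+1 + 1 = (2 * d).+3)%N; last by lia.
rewrite !subSS !subn0 !addn1 (factS (2 * k).+1) (factS (2 * k)) (factS k) (factS k.+2).
rewrite (factS (2 * d).+2) (factS (2 * d).+1) (factS d).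
move: (natr_fact_neq0 (2 * k)) (natr_fact_neq0 k) (natr_fact_neq0 k.+2).
move: (natr_fact_neq0 (2 * d).+1) (natr_fact_neq0 d) (natr_fact_neq0 (2 * (k.+2 + d)).+1).
move: (ler0n R k) (ler0n R d).
move: (2 * k)`! k`! k.+2`! (2 * d).+1`! d`! (2 * (k.+2 + d)).+1`! (k.+2 + d)`!.
move=> *; by rewrite !(natrD, natrM) -!natr1; field; nonzero.
Qed.

(* Gosper-style closed form of the partial sums of the downward jump law *)
Lemma sum_p_down_partial n K : (K < n)%N ->
  \sum_(1 <= k < K.+2) p_down R n k
  = (n%:R - p_down R n K.+1 * ((n - K.+1)%N%:R * (2 * K + 1)%N%:R)) / (3 * n + 3)%N%:R.
Proof.
elim: K => [|K IH] Kn.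
  case: n Kn => [//|y] _; rewrite big_nat1 p_down1 subSS subn0.
  have := ler0n R y; rewrite !(natrD, natrM) => y0; field; nonzero.
rewrite big_nat_recr //= IH; last by lia.
have [d ->] : exists d, n = (K.+2 + d)%N by exists (n - K.+2)%N; lia.
rewrite (_ : K.+2 + d - K.+1 = d.+1)%N ?addKn; last by lia.
rewrite p_downS; move: (p_down R (K.+2 + d) K.+1) => a.
have := ler0n R K; have := ler0n R d.
by rewrite !(natrD, natrM) -!natr1 => *; field; nonzero.
Qed.

Lemma p_up_add_sum_p_down x : p_up R x + \sum_(1 <= j < x.+1) p_down R x j = 1.
Proof.
case: x => [|y]; first by rewrite big_geq // addr0 /p_up divff // pnatr_eq0.
rewrite sum_p_down_partial // subnn mul0r mulr0 subr0 /p_up.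
have := ler0n R y; rewrite !(natrD, natrM) -!natr1 => y0; field; nonzero.
Qed.

Lemma p_down_ge0 x j : 0 <= p_down R x j.
Proof. by rewrite /p_down !mulr_ge0 ?divr_ge0 ?ler0n. Qed.

Lemma p_up_ge x : 2 / 3 <= p_up R x.
Proof.
rewrite /p_up ler_pdivlMr; last by rewrite ltr0n addn3.
by have := ler0n R x; rewrite !(natrD, natrM); lra.
Qed.

Lemma fallingS (z : R) j : falling z j.+1 = falling z j * (z - j%:R).
Proof. by rewrite /falling big_ord_recr. Qed.

Lemma falling_addr1 (z : R) j : falling (z + 1) j * (z + 1 - j%:R) = falling z j * (z + 1).
Proof.
elim: j => [|j IH]; first by rewrite /falling !big_ord0 subr0.
rewrite !fallingS IH -natr1; ring.
Qed.

Lemma falling_nat_eq0 (y j : nat) : (y < j)%N -> falling (y%:R : R) j = 0.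
Proof.
elim: j => [//|j IH]; rewrite ltnS leq_eqVlt fallingS => /orP[/eqP->|yj].
  by rewrite subrr mulr0.
by rewrite IH ?mul0r.
Qed.

Lemma half_sub_nat_neq0 (y i : nat) : y%:R + 2^-1 - i%:R != 0 :> R.
Proof.
apply/eqP => h.
have : (2 * y + 1)%N%:R - (2 * i)%N%:R = 2 * (y%:R + 2^-1 - i%:R) :> R.
  by rewrite !(natrD, natrM); field.
by rewrite h mulr0 => /eqP; rewrite subr_eq0 eqr_nat => /eqP; lia.
Qed.

Lemma falling_half_neq0 (y j : nat) : falling (y%:R + 2^-1 : R) j != 0.
Proof.
elim: j => [|j IH]; first by rewrite /falling big_ord0 oner_neq0.
by rewrite fallingS mulf_neq0 // half_sub_nat_neq0.
Qed.

Definition fall_ratio (j y : nat) : R := falling (y%:R : R) j / falling (y%:R + 2^-1) j.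

Lemma fall_ratio_eq0 j y : (y < j)%N -> fall_ratio j y = 0.
Proof. by move=> yj; rewrite /fall_ratio falling_nat_eq0 ?mul0r. Qed.

Lemma fall_ratio_prod j y :
  fall_ratio j y = \prod_(i < j) ((y%:R - i%:R) / (y%:R - i%:R + 2^-1)).
Proof. by rewrite /fall_ratio /falling -prodf_div; apply: eq_bigr => i _; rewrite addrAC. Qed.

Lemma fall_ratio_pred j y : fall_ratio j y
  = fall_ratio j y.+1 * ((y%:R + 1 - j%:R) * (y%:R + 2^-1 + 1))
    / ((y%:R + 1) * (y%:R + 2^-1 + 1 - j%:R)).
Proof.
rewrite /fall_ratio -(natr1 y) [_ + 1 + 2^-1]addrAC.
have b0 := falling_half_neq0 y j.
have b1 : falling (y%:R + 2^-1 + 1 : R) j != 0.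
  by rewrite addrAC natr1 falling_half_neq0.
have c1 : y%:R + 2^-1 + 1 - j%:R != 0 :> R.
  by rewrite [y%:R + 2^-1 + 1]addrAC natr1 half_sub_nat_neq0.
have := falling_addr1 y%:R j; have := falling_addr1 (y%:R + 2^-1) j; have := ler0n R y.
move: b0 b1 c1; set z : R := y%:R; clearbody z.
move: (falling z j) (falling (z + 1) j) (falling (z + 2^-1) j) (falling (z + 2^-1 + 1) j).
move=> a a' b b' b0 b1 c1 z0 hb ha.
have -> : a' / b' * ((z + 1 - j%:R) * (z + 2^-1 + 1)) = a * (z + 1) * (z + 2^-1 + 1) / b'.
  by rewrite -ha; field.
move: (z + 2^-1 + 1 - j%:R) c1 hb => c c1 hb.
rewrite (_ : a * (z + 1) * (z + 2^-1 + 1) / b' / ((z + 1) * c)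
    = a * (z + 2^-1 + 1) / (b' * c)); last by field; nonzero.
by rewrite hb; field; nonzero.
Qed.

Lemma half_ratio_ge0 (a : R) : 0 <= a -> 0 <= a / (a + 2^-1).
Proof. by move=> a0; rewrite divr_ge0 //; lra. Qed.

Lemma half_ratio_le (a b : R) : 0 <= a -> a <= b -> a / (a + 2^-1) <= b / (b + 2^-1).
Proof.
move=> a0 ab; rewrite -subr_ge0.
rewrite (_ : _ - _ = 2^-1 * (b - a) / ((a + 2^-1) * (b + 2^-1))); last by field; nonzero.
by rewrite divr_ge0 ?mulr_ge0 //; lra.
Qed.

Lemma half_ratio_cvg1 (i : nat) :
  (y%:R - i%:R) / (y%:R - i%:R + 2^-1) @[y --> \oo] --> (1 : R).
Proof.
have inv_cvg0 : (y%:R + (2^-1 - i%:R))^-1 @[y --> \oo] --> (0 : R).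
  have pos : \forall y \near \oo, 0 < y%:R + (2^-1 - i%:R) :> R.
    by near=> y; rewrite -ltrBlDr; near: y; exact: nbhs_infty_gtr.
  apply/(gtr0_cvgV0 pos)/cvgryPge => M.
  by near=> y; rewrite -lerBlDr; near: y; exact: nbhs_infty_ger.
have lim : (fun y : nat => 1 - 2^-1 * (y%:R + (2^-1 - i%:R))^-1) @ \oo --> (1 - 2^-1 * 0 : R).
  by apply: cvgB; [exact: cvg_cst | exact: cvgMl_tmp].
rewrite mulr0 subr0 in lim.
suff -> : (fun y : nat => (y%:R - i%:R) / (y%:R - i%:R + 2^-1) : R)
  = (fun y => 1 - 2^-1 * (y%:R + (2^-1 - i%:R))^-1) by [].
apply: funext => y; rewrite addrA [y%:R + 2^-1 - _]addrAC.
have nz := half_sub_nat_neq0 y i; rewrite [y%:R + 2^-1 - _]addrAC in nz.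
by rewrite -[X in _ = X - _](divff nz) -mulrBl addrK.
Unshelve. all: by end_near.
Qed.

Lemma fall_ratio_ge0 j y : 0 <= fall_ratio j y.
Proof.
have [yj|jy] := ltnP y j; first by rewrite fall_ratio_eq0.
rewrite fall_ratio_prod; apply: prodr_ge0 => i _; apply: half_ratio_ge0.
by rewrite subr_ge0 ler_nat; apply: leq_trans jy; apply: ltnW.
Qed.

Lemma fall_ratio_nondecreasing j : nondecreasing_seq (fall_ratio j).
Proof.
move=> a b ab; have [aj|ja] := ltnP a j; first by rewrite fall_ratio_eq0 ?fall_ratio_ge0.
rewrite !fall_ratio_prod; apply: ler_prod => i _.
have ia : 0 <= a%:R - i%:R :> R.
  by rewrite subr_ge0 ler_nat; apply: leq_trans ja; apply: ltnW.
by rewrite half_ratio_ge0 // half_ratio_le // lerD2r ler_nat.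
Qed.

Lemma fall_ratio_cvg1 j : fall_ratio j @ \oo --> (1 : R).
Proof.
rewrite (funext (fall_ratio_prod j)) -[X in _ --> X](expr1n _ #|{: 'I_j}|) -prodr_const.
by apply: cvg_big => [|i _]; [exact: mul_continuous | exact: half_ratio_cvg1].
Qed.

(* the h-transform by fall_ratio j of the chain on [j, oo) is the chain shifted by j *)
Lemma p_up_fall_ratio j d :
  p_up R (j + d) * fall_ratio j (j + d).+1 = fall_ratio j (j + d) * p_up R d.
Proof.
rewrite (fall_ratio_pred j (j + d)) /p_up; move: (fall_ratio j _) => r.
have := ler0n R j; have := ler0n R d.
by rewrite !(natrD, natrM) => *; field; nonzero.
Qed.

Lemma p_down_fall_ratio j k e :
  p_down R (j + k.+1 + e) k.+1 * fall_ratio j (j + e)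
  = fall_ratio j (j + k.+1 + e) * p_down R (k.+1 + e) k.+1.
Proof.
have j0 := ler0n R j.
elim: k e => [|k IH] e.
  rewrite (_ : j + 1 + e = (j + e).+1)%N ?add1n ?p_down1 ?(fall_ratio_pred j (j + e)); last by lia.
  move: (fall_ratio j _) => r; have := ler0n R e.
  by rewrite !(natrD, natrM) -!natr1 => *; field; nonzero.
rewrite (_ : j + k.+2 + e = k.+2 + (j + e))%N; last by lia.
have := IH e.+1.
rewrite (_ : j + k.+1 + e.+1 = k.+2 + (j + e))%N; last by lia.
rewrite (_ : k.+1 + e.+1 = k.+2 + e)%N ?addnS; last by lia.
rewrite (fall_ratio_pred j (j + e)) !p_downS => IHe.
move: (p_down R _ k.+1) (fall_ratio j _) (fall_ratio j _) (p_down R _ k.+1) IHe.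
move=> a r r' b IHe; rewrite mulrACA [X in X * _ = _]mulrACA IHe.
by have := ler0n R k; have := ler0n R e; rewrite -!natr1 !(natrD, natrM) => *; field; nonzero.
Qed.

Lemma step_fall_ratio_shift j d :
  step (p_up R) (p_down R) (fall_ratio j) (j + d) = fall_ratio j (j + d).
Proof.
rewrite /step p_up_fall_ratio (big_cat_nat _ (n := d.+1)) //=; last by lia.
rewrite [X in _ + (_ + X)]big_nat_cond [X in _ + (_ + X)]big1 ?addr0; last first.
  by move=> k /andP[/andP[dk kjd] _]; rewrite fall_ratio_eq0 ?mulr0 //; lia.
rewrite (eq_big_nat _ _ (F2 := fun k => fall_ratio j (j + d) * p_down R d k)); last first.
  case=> [//|k] /andP[_ kd]; have [e ->] : exists e, d = (k.+1 + e)%N by exists (d - k.+1)%N; lia.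
  by rewrite (_ : j + (k.+1 + e) - k.+1 = j + e)%N ?addnA ?p_down_fall_ratio //; lia.
by rewrite -big_distrr -mulrDr p_up_add_sum_p_down mulr1.
Qed.

Lemma step_fall_ratio m x : x != m ->
  step (p_up R) (p_down R) (fall_ratio m.+1) x = fall_ratio m.+1 x.
Proof.
move=> xm; have [mx|xm'] := ltnP m x.
  by rewrite -(subnKC mx) step_fall_ratio_shift.
have {xm xm'} xm : (x < m)%N by rewrite ltn_neqAle xm xm'.
rewrite /step !fall_ratio_eq0 ?mulr0 ?add0r; try lia.
by rewrite big1 // => j _; rewrite fall_ratio_eq0 ?mulr0 //; lia.
Qed.

Lemma hit_withinE m k : hit_within R m k = hit (p_up R) (p_down R) m k.
Proof. by elim: k => [|k IH]; apply: funext => x //=; rewrite IH. Qed.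

Theorem hit_within_cvg m x :
  hit_within R m k x @[k --> \oo] --> 1 - fall_ratio m.+1 x.
Proof.
under eq_cvg do rewrite hit_withinE.
apply: (hit_cvg (q := 2 / 3)) => //.
- exact: p_up_ge.
- exact: p_down_ge0.
- exact: p_up_add_sum_p_down.
- exact: fall_ratio_ge0.
- exact: fall_ratio_nondecreasing.
- exact: fall_ratio_cvg1.
- exact: fall_ratio_eq0.
- exact: step_fall_ratio.
Qed.

Lemma compl_fall_ratio1 n : 1 - fall_ratio 1 n = (2 * n + 1)%N%:R^-1.
Proof.
rewrite /fall_ratio /falling !big_ord1 !subr0.
by have := ler0n R n; rewrite !(natrD, natrM) => ?; field; nonzero.
Qed.

Lemma return_within0 k : return_within R k 0 = hit_within R 0 k 1.
Proof. by rewrite /return_within big_geq // addr0 /p_up divff ?mul1r // pnatr_eq0. Qed.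

End BoundaryChain.

Theorem claim3p3 (R : realType) :
  (forall m n : nat, (m < n)%N ->
     (fun k => hit_within R m k n) @ \oo -->
       (1 - falling (n%:R) m.+1 / falling (n%:R + 2^-1) m.+1 : R))
  /\ (forall n : nat, (0 < n)%N ->
     (fun k => hit_within R 0 k n) @ \oo --> ((2 * n + 1)%N%:R^-1 : R))
  /\ (exists rho : R, rho < 1 /\ (fun k => return_within R k 0) @ \oo --> (rho : R)).
Proof.
have hit0_cvg n : hit_within R 0 k n @[k --> \oo] --> ((2 * n + 1)%N%:R^-1 : R).
  by rewrite -compl_fall_ratio1; exact: hit_within_cvg.
split; first by move=> m n _; exact: hit_within_cvg.
split; first by move=> n _; exact: hit0_cvg.
exists (2 * 1 + 1)%N%:R^-1; split; first by rewrite invf_lt1 ?ltr1n ?ltr0n.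
by under eq_cvg do rewrite return_within0; exact: hit0_cvg.
Qed.
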